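(* Let $A$ and $B$ be strongly regular graphs with the same parameters $(n,d,\lambda,\mu)$ (possibly $A\cong B$). Let $A'$ and $B'$ be partially colored versions in which the colored vertices are $a_1,\dots,a_m\in V(A)$ and $b_1,\dots,b_m\in V(B)$, with $a_i$ and $b_i$ both colored $i$, each color $1,\dots,m$ occurring exactly once in each graph and all other vertices uncolored. Let $G=G(A',B')$ and $H=G(A',A')$ (the latter built from two vertex-disjoint copies of $A'$). (1) If $\mathrm{WL}_1(A')\ne\mathrm{WL}_1(B')$, then $\mathrm{WL}_1(G)\ne\mathrm{WL}_1(H)$. (2) If for some $r\ge1$ the multisets of 1-WL colors after $r$ rounds coincide, $\{\!\{C^r_{A'}(x)\}\!\}_{x\in V(A)}=\{\!\{C^r_{B'}(x)\}\!\}_{x\in V(B)}$, then $\omega^{(r-1)}(G)=\omega^{(r-1)}(H)$.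
   Context: Graphs are finite, simple and undirected. A strongly regular graph with parameters $(n,d,\lambda,\mu)$ is an $n$-vertex $d$-regular graph in which any two adjacent vertices have $\lambda$ common neighbours and any two distinct non-adjacent vertices have $\mu$ common neighbours. Construction $G(A',B')$ (uncolored graph): take the vertex-disjoint union of $A$ and $B$; for each $i=1,\dots,m$ add a new connecting vertex $c_i$ adjacent to $a_i$ and $b_i$, and $i$ new pendant vertices $p_{i,1},\dots,p_{i,i}$, each of degree $1$ and adjacent only to $c_i$. All colors are discarded. Color refinement (1-WL) on a vertex-colored graph $X$ with $N$ vertices: $C^0_X(x)$ is the color of $x$ (a common default color for uncolored vertices), $C^{r+1}_X(x)=\big(C^r_X(x),\{\!\{C^r_X(y)\}\!\}_{y\in N(x)}\big)$, with $\{\!\{\cdot\}\!\}$ a multiset; $\mathrm{WL}_1(X)=\{\!\{C^N_X(x)\}\!\}_{x\in V(X)}$. Let $w_k(x,y)$ be the number of walks of length $k$ from $x$ to $y$ in an $N$-vertex graph and $w_*(x,y)=(w_0(x,y),\dots,w_{N-1}(x,y))$. Define $\omega_0(x)=w_*(x,x)$, $\omega_{r+1}(x)=\big(\omega_r(x),\{\!\{(w_*(x,y),\omega_r(y))\}\!\}_{y}\big)$ and $\omega^{(r)}(G)=\{\!\{\omega_r(x)\}\!\}_{x\in V(G)}$. *)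

From HB Require Import structures.
From mathcomp Require Import all_boot.
From mathcomp Require Export boolp.

Set Implicit Arguments.
Unset Strict Implicit.
Unset Printing Implicit Defensive.

Definition simple_graph (T : finType) (e : rel T) : Prop :=
  symmetric e /\ irreflexive e.

Definition srg (T : finType) (e : rel T) (n d lam mu : nat) : Prop :=
  [/\ simple_graph e, #|T| = n,
      (forall x, #|[set y | e x y]| = d),
      (forall x y, x != y -> e x y -> #|[set z | e x z && e y z]| = lam)
    & (forall x y, x != y -> ~~ e x y -> #|[set z | e x z && e y z]| = mu)].

(* Colours after r rounds; a multiset over a type K is a counting function
   K -> nat.  Initial colours are option nat (None = uncoloured). *)
Fixpoint wlcol (r : nat) : Type :=
  match r with
  | 0 => option nat
  | r'.+1 => (wlcol r' * (wlcol r' -> nat))%type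
  end.

Fixpoint wlC (T : finType) (e : rel T) (c : T -> option nat) (r : nat)
  {struct r} : T -> wlcol r :=
  match r return T -> wlcol r with
  | 0 => c
  | r'.+1 => fun x =>
      (wlC e c r' x, fun k => #|[set y | e x y && `[< wlC e c r' y = k >]]|)
  end.

Definition wlms (T : finType) (e : rel T) (c : T -> option nat) (r : nat)
  : wlcol r -> nat :=
  fun k => #|[set x | `[< wlC e c r x = k >]]|.

Arguments wlms {T} e c r _.

Definition WL1 (T : finType) (e : rel T) (c : T -> option nat)
  : {N : nat & wlcol N -> nat} :=
  existT (fun N => wlcol N -> nat) #|T| (wlms e c #|T|).

Fixpoint walks (T : finType) (e : rel T) (k : nat) (x y : T) {struct k} : nat :=
  match k with
  | 0 => nat_of_bool (x == y)
  | k'.+1 => \sum_(z | e x z) walks e k' z y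
  end.

Definition wstar (T : finType) (e : rel T) (x y : T) : seq nat :=
  [seq walks e k x y | k <- iota 0 #|T|].

Fixpoint omty (r : nat) : Type :=
  match r with
  | 0 => seq nat
  | r'.+1 => (omty r' * ((seq nat * omty r') -> nat))%type
  end.

Fixpoint omega (T : finType) (e : rel T) (r : nat) {struct r} : T -> omty r :=
  match r return T -> omty r with
  | 0 => fun x => wstar e x x
  | r'.+1 => fun x =>
      (omega e r' x,
       fun p => #|[set y | `[< (wstar e x y, omega e r' y) = p >]]|)
  end.

Definition omegams (T : finType) (e : rel T) (r : nat) : omty r -> nat :=
  fun o => #|[set x | `[< omega e r x = o >]]|.
Arguments omegams {T} e r _.

(* A' : vertex a_i (i = 1..m, here i : 'I_m stands for i+1) coloured i,
   all other vertices uncoloured (None). *)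
Definition pcol (T : finType) (m : nat) (a : 'I_m -> T) : T -> option nat :=
  fun x => omap (fun i : 'I_m => (nat_of_ord i).+1) [pick i | a i == x].

Definition nocol (T : finType) : T -> option nat := fun _ => None.

(* Vertices of G(A',B'): V(A) + V(B) + connectors c_i + pendants p_{i,j}
   (connector i : 'I_m is c_{i+1}, which has i+1 pendants). *)
Notation gvert TA TB m :=
  ((TA + TB) + ('I_m + {i : 'I_m & 'I_(nat_of_ord i).+1}))%type.

Definition gadj (TA TB : finType) (m : nat) (eA : rel TA) (eB : rel TB)
  (a : 'I_m -> TA) (b : 'I_m -> TB) : rel (gvert TA TB m) :=
  fun u v =>
  match u, v with
  | inl (inl x), inl (inl y) => eA x y
  | inl (inr x), inl (inr y) => eB x y
  | inl (inl x), inr (inl i) => x == a i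
  | inr (inl i), inl (inl x) => x == a i
  | inl (inr x), inr (inl i) => x == b i
  | inr (inl i), inl (inr x) => x == b i
  | inr (inl i), inr (inr p) => tag p == i
  | inr (inr p), inr (inl i) => tag p == i
  | _, _ => false
  end.

(** (1) In G(A',B') colour refinement recognises the gadgets: when the sides are
    d-regular with d >= 1, the connectors and pendants are exactly the vertices of
    degree 1 next to a vertex of degree >= 3, or of degree >= 3 next to a leaf, and
    a side vertex carries colour i+1 iff it is adjacent to such a vertex of degree
    i+3.  Hence after s+3 rounds the colour of a side vertex in G determines its
    colour after s rounds in A' or B'.  Counting the side vertices of each colour,
    WL_1(G) = WL_1(H) forces WL_1(A') = WL_1(B'); for d = 0 or m = 0 the colourings
    of A' and B' are trivially stable.

    (2) Fix a target v.  By the identity A^2 = dI + lam A + mu (J - I - A) of a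
    strongly regular graph, the walk counts w_k(z, v) for z in the X-side of
    G(A',X') always have the form
      al + sum_j be_j [z = x_j] + sum_j ga_j [z ~ x_j] + de [z = v] + ep [z ~ v],
    and these coefficients, together with the values on the rest of the graph,
    evolve by a recursion that only sees A', the parameters and the adjacency among
    the x_j.  So w_*(u, v) depends on vertices of X' only through their 1-WL colour,
    their equality and their adjacency, and omega^(r-1) of G(A',B') and G(A',A')
    agree by induction on the number of rounds. *)

From mathcomp Require Import all_boot boolp.
From mathcomp Require Import ssralg ssrnum ssrint rat zify ring.

Set Implicit Arguments.
Unset Strict Implicit.
Unset Printing Implicit Defensive.

Import GRing.Theory Num.Theory.

Section Multisets.
Variables (T1 T2 : finType) (K : Type) (P1 : pred T1) (P2 : pred T2).
Variables (C1 : T1 -> K) (C2 : T2 -> K).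

Definition mult_eq := forall k,
  #|[set z | P1 z && `[< C1 z = k >]]| = #|[set z | P2 z && `[< C2 z = k >]]|.

Hypothesis eqC : mult_eq.

Lemma mult_eq_exists z1 : P1 z1 -> exists2 z2, P2 z2 & C2 z2 = C1 z1.
Proof.
move=> P1z; have : 0 < #|[set z | P2 z && `[< C2 z = C1 z1 >]]|.
  by rewrite -eqC; apply/card_gt0P; exists z1; rewrite inE P1z; apply/asboolP.
by case/card_gt0P=> z2; rewrite inE => /andP[P2z /asboolP]; exists z2.
Qed.

Local Open Scope ring_scope.

(* Double counting: each z1 spreads weight 1 evenly over the P2-part of its class. *)
Lemma mult_eq_sum (F : K -> rat) :
  \sum_(z | P1 z) F (C1 z) = \sum_(z | P2 z) F (C2 z).
Proof.
pose n k := #|[set z | P2 z && `[< C2 z = k >]]|.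
have avg (T : finType) (Q : pred T) (x : rat) (c : nat) :
    #|[set z | Q z]| = c -> (0 < c)%N -> \sum_(z | Q z) x / c%:R = x.
  move=> cardQ c_gt0; rewrite sumr_const.
  have -> : #|Q| = c by rewrite -cardQ; apply: eq_card => z; rewrite inE.
  by rewrite -[_ / _ *+ _]mulr_natr divfK // pnatr_eq0 -lt0n.
transitivity (\sum_(z1 | P1 z1) \sum_(z2 | P2 z2 && `[< C2 z2 = C1 z1 >])
                 F (C2 z2) / (n (C2 z2))%:R).
  apply: eq_bigr => z1 P1z; have [z2 P2z Ez2] := mult_eq_exists P1z.
  rewrite -(avg _ _ (F (C1 z1)) (n (C1 z1)) (erefl _)); last first.
    by apply/card_gt0P; exists z2; rewrite inE P2z; apply/asboolP.
  by apply: eq_bigr => z /andP[_ /asboolP ->].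
rewrite (exchange_big_dep P2) /=; last by move=> ? ? _ /andP[].
apply: eq_bigr => z2 P2z; apply: avg; last first.
  by apply/card_gt0P; exists z2; rewrite inE P2z; apply/asboolP.
rewrite /n -eqC; apply: eq_card => z1; rewrite !inE P2z /=.
by congr (_ && _); apply/asboolP/asboolP.
Qed.

Lemma mult_eq_card (R : pred K) :
  #|[set z | P1 z && R (C1 z)]| = #|[set z | P2 z && R (C2 z)]|.
Proof.
have cardE (T : finType) (P : pred T) (C : T -> K) :
    #|[set z | P z && R (C z)]|%:R = \sum_(z | P z) (R (C z))%:R :> rat.
  rewrite -sum1_card natr_sum (eq_bigl (fun z => P z && R (C z))) => [|z]; last first.
    by rewrite inE.
  by rewrite big_mkcondr /=; apply: eq_bigr => z _; case: (R (C z)).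
by apply/eqP; rewrite -(eqr_nat rat) !cardE (mult_eq_sum (fun k => (R k)%:R)).
Qed.
End Multisets.

Lemma mult_eq_sym (T1 T2 : finType) (K : Type) (P1 : pred T1) (P2 : pred T2)
    (C1 : T1 -> K) (C2 : T2 -> K) :
  mult_eq P1 P2 C1 C2 -> mult_eq P2 P1 C2 C1.
Proof. by move=> eqC k; rewrite eqC. Qed.

(* No consistency hypothesis on f2 is needed: two z2 in one class are both matched
   to a common z1. *)
Lemma mult_eq_comp (T1 T2 : finType) (K Q : Type) (P1 : pred T1) (P2 : pred T2)
    (C1 : T1 -> K) (C2 : T2 -> K) (f1 : T1 -> Q) (f2 : T2 -> Q) :
  mult_eq P1 P2 C1 C2 ->
  (forall z1 z2, P1 z1 -> P2 z2 -> C1 z1 = C2 z2 -> f1 z1 = f2 z2) ->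
  mult_eq P1 P2 f1 f2.
Proof.
move=> eqC f12 p.
pose R k := `[< exists2 z1, P1 z1 & C1 z1 = k /\ f1 z1 = p >].
transitivity #|[set z | P1 z && R (C1 z)]|.
  apply: eq_card => z; rewrite !inE; case: (boolP (P1 z)) => //= P1z.
  apply/asboolP/asboolP => [<-|[z1 P1z1 [E <-]]]; first by exists z.
  have [z2 P2z2 E2] := mult_eq_exists eqC P1z.
  by rewrite (f12 _ _ P1z P2z2 (esym E2)) (f12 _ _ P1z1 P2z2) // E E2.
rewrite (mult_eq_card eqC); apply: eq_card => z; rewrite !inE.
case: (boolP (P2 z)) => //= P2z.
apply/asboolP/asboolP => [[z1 P1z1 [E <-]]|<-]; first by rewrite (f12 _ _ P1z1 P2z E).
have [z1 P1z1 E1] := mult_eq_exists (mult_eq_sym eqC) P2z.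
by exists z1 => //; split=> //; apply: f12.
Qed.

Lemma card_set_nil (T : finType) (P : pred T) : (forall z, ~~ P z) -> #|[set z | P z]| = 0.
Proof.
by move=> noP; apply/eqP; rewrite cards_eq0; apply/eqP/setP => z; rewrite !inE (negbTE (noP z)).
Qed.

Lemma card_set0 (T : finType) : #|[set z : T | false]| = 0.
Proof. exact: card_set_nil. Qed.

Lemma card_set_eq1 (T : finType) (y : T) : #|[set z | z == y]| = 1.
Proof. by rewrite -(cards1 y); apply: eq_card => z; rewrite !inE. Qed.

Lemma card_nbr_eq (T : finType) (e : rel T) z w : #|[set y | e z y && (y == w)]| = e z w.
Proof.
case: (boolP (e z w)) => zw.
  rewrite (eq_card (B := pred1 w)) ?card1 // => y.
  by rewrite !inE; case: eqP => [->|]; rewrite ?zw ?andbF.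
by apply: card_set_nil => y; apply/negP => /andP[zy /eqP wy]; move: zw; rewrite -wy zy.
Qed.

Lemma card_sum_indicator (T : finType) (P : pred T) : #|[set z | P z]| = \sum_z (P z : nat).
Proof.
rewrite -sum1_card (eq_bigl P) => [|z]; last by rewrite inE.
by rewrite big_mkcond /=; apply: eq_bigr => z _; case: (P z).
Qed.

Lemma card_set_sum (A B : finType) (P : pred (A + B)) :
  #|[set u | P u]| = #|[set p | P (inl p)]| + #|[set q | P (inr q)]|.
Proof.
rewrite -!sum1_card (eq_bigl P) => [|u]; last by rewrite inE.
by rewrite big_sumType; congr (_ + _); apply: eq_bigl => u; rewrite inE.
Qed.

Lemma asbool_Some (K : Type) (c k : K) : `[< Some c = Some k >] = `[< c = k >].
Proof. by apply/asboolP/asboolP => [[]|->]. Qed.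

Lemma asbool_NoneSome (K : Type) (k : K) : `[< None = Some k >] = false.
Proof. by apply/asboolP. Qed.

Section ColourRefinement.
Variables (V1 V2 : finType) (g1 : rel V1) (g2 : rel V2).
Variables (c1 : V1 -> option nat) (c2 : V2 -> option nat).

Lemma wlC_le s r u1 u2 : s <= r ->
  wlC g1 c1 r u1 = wlC g2 c2 r u2 -> wlC g1 c1 s u1 = wlC g2 c2 s u2.
Proof.
move=> /subnKC <-; elim: (r - s) => [|t IH]; first by rewrite addn0.
by rewrite addnS => -[/IH].
Qed.

Lemma wlC_nbr r u1 u2 : wlC g1 c1 r.+1 u1 = wlC g2 c2 r.+1 u2 ->
  mult_eq (g1 u1) (g2 u2) (wlC g1 c1 r) (wlC g2 c2 r).
Proof. by case=> _ E k; exact: (congr1 (fun f => f k) E). Qed.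

Lemma wlC_nbr_exists r u1 u2 (P1 : pred V1) (P2 : pred V2) :
  wlC g1 c1 r.+1 u1 = wlC g2 c2 r.+1 u2 ->
  (forall w1 w2, wlC g1 c1 r w1 = wlC g2 c2 r w2 -> P1 w1 = P2 w2) ->
  [exists w, g1 u1 w && P1 w] = [exists w, g2 u2 w && P2 w].
Proof.
move=> /wlC_nbr eqN eqP12; apply/existsP/existsP => -[w /andP[gw Pw]].
  have [w2 g2w E] := mult_eq_exists eqN gw.
  by exists w2; rewrite g2w -(eqP12 _ _ (esym E)).
have [w1 g1w E] := mult_eq_exists (mult_eq_sym eqN) gw.
by exists w1; rewrite g1w (eqP12 _ _ E).
Qed.

Lemma wlmsP r : wlms g1 c1 r = wlms g2 c2 r <->
  mult_eq xpredT xpredT (wlC g1 c1 r) (wlC g2 c2 r).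
Proof. by split=> [E k | eqC]; [exact: (congr1 (fun f => f k) E) | exact: funext]. Qed.

Lemma wlms_le s r : s <= r -> wlms g1 c1 r = wlms g2 c2 r -> wlms g1 c1 s = wlms g2 c2 s.
Proof.
move=> le_sr /wlmsP eqC; apply/wlmsP.
by apply: mult_eq_comp eqC _ => u1 u2 _ _; apply: wlC_le.
Qed.
End ColourRefinement.

Lemma card_rel_class (T : finType) (K : Type) (e : rel T) (C : T -> K) y k b1 b2 :
  symmetric e -> irreflexive e ->
  #|[set z | `[< (C z, z == y, e z y) = (k, b1, b2) >]]| =
  if b1 then (`[< C y = k >] && ~~ b2 : nat)
  else if b2 then #|[set z | e y z && `[< C z = k >]]|
  else #|[set z | `[< C z = k >]]| - `[< C y = k >] - #|[set z | e y z && `[< C z = k >]]|.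
Proof.
move=> sym irr.
have -> : [set z | `[< (C z, z == y, e z y) = (k, b1, b2) >]] =
          [set z | [&& `[< C z = k >], (z == y) == b1 & e y z == b2]].
  apply/setP => z; rewrite !inE (sym y z).
  apply/asboolP/and3P => [[Ck <- <-]|[/asboolP Ck /eqP Ey /eqP Ee]].
    by rewrite !eqxx; split=> //; apply/asboolP.
  by rewrite Ck Ey Ee.
rewrite !card_sum_indicator; case: b1; last case: b2.
- rewrite (bigD1 y) //= eqxx irr big1 ?addn0 => [|z /negbTE ->]; last by rewrite andbF.
  by case: b2; rewrite ?andbT ?andbF.
- apply: eq_bigr => z _; case: (eqVneq z y) => [->|_]; first by rewrite irr /= andbF.
  by rewrite /= eqb_id andbC.
have Cy : (`[< C y = k >] : nat) = \sum_z ((z == y) && `[< C z = k >] : nat).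
  by rewrite (bigD1 y) //= eqxx big1 ?addn0 // => z /negbTE ->.
have total : \sum_z (`[< C z = k >] : nat) = `[< C y = k >]
    + \sum_z (e y z && `[< C z = k >] : nat)
    + \sum_z ([&& `[< C z = k >], (z == y) == false & e y z == false] : nat).
  rewrite Cy -!big_split; apply: eq_bigr => z _ /=.
  case: (eqVneq z y) => [->|_]; first by rewrite irr /= andbF !addn0.
  by case: (e y z); case: (`[< C z = k >]).
by rewrite total -addnA !addKn.
Qed.

Lemma wlC_rel_mult_eq (T1 T2 : finType) (e1 : rel T1) (e2 : rel T2) c1 c2 s y1 y2 :
  symmetric e1 -> irreflexive e1 -> symmetric e2 -> irreflexive e2 ->
  wlms e1 c1 s = wlms e2 c2 s -> wlC e1 c1 s.+1 y1 = wlC e2 c2 s.+1 y2 ->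
  mult_eq xpredT xpredT (fun z => (wlC e1 c1 s z, z == y1, e1 z y1))
                        (fun z => (wlC e2 c2 s z, z == y2, e2 z y2)).
Proof.
move=> sym1 irr1 sym2 irr2 eqwl E [[k b1] b2] /=.
rewrite (card_rel_class _ _ _ _ _ sym1 irr1) (card_rel_class _ _ _ _ _ sym2 irr2).
have Mk : #|[set z | `[< wlC e1 c1 s z = k >]]| = #|[set z | `[< wlC e2 c2 s z = k >]]|.
  exact: (congr1 (fun f => f k) eqwl).
have E0 : wlC e1 c1 s y1 = wlC e2 c2 s y2 := congr1 fst E.
by rewrite (wlC_nbr E k) Mk E0.
Qed.

Definition regular (T : finType) (e : rel T) (d : nat) := forall z, #|[set y | e z y]| = d.

Lemma regular0_edgeless (T : finType) (e : rel T) : regular e 0 -> forall x y, ~~ e x y.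
Proof.
move=> reg0 x y; apply/negP => xy; move: (reg0 x) => /eqP.
by rewrite cards_eq0 => /eqP/setP/(_ y); rewrite !inE xy.
Qed.

Section DegenerateRefinement.
Variables (T1 T2 : finType) (e1 : rel T1) (e2 : rel T2).
Variables (c1 : T1 -> option nat) (c2 : T2 -> option nat).

Lemma wlC_edgeless r x1 x2 : (forall x y, ~~ e1 x y) -> (forall x y, ~~ e2 x y) ->
  c1 x1 = c2 x2 -> wlC e1 c1 r x1 = wlC e2 c2 r x2.
Proof.
move=> no1 no2; elim: r x1 x2 => [|r IH] x1 x2 c12 //=.
rewrite (IH _ _ c12); congr pair; apply: funext => k.
by rewrite !card_set_nil // => y; rewrite ?(negbTE (no1 _ _)) ?(negbTE (no2 _ _)).
Qed.

Lemma wlC_regular d r x1 x2 : regular e1 d -> regular e2 d ->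
  (forall z, c1 z = None) -> (forall z, c2 z = None) -> wlC e1 c1 r x1 = wlC e2 c2 r x2.
Proof.
move=> reg1 reg2 nc1 nc2; elim: r x1 x2 => [|r IH] x1 x2 /=; first by rewrite nc1 nc2.
rewrite (IH x1 x2); congr pair; apply: funext => k.
have count (T : finType) (e : rel T) (C : T -> wlcol r) x : regular e d ->
    (forall y, C y = wlC e2 c2 r x2) ->
    #|[set y | e x y && `[< C y = k >]]| = if `[< wlC e2 c2 r x2 = k >] then d else 0.
  move=> reg allC; case: asboolP => [<-|ne].
    by rewrite -(reg x); apply: eq_card => y; rewrite !inE allC asboolT ?andbT.
  by apply: card_set_nil => y; rewrite allC asboolF ?andbF.
rewrite (count _ _ _ _ reg1 (fun y => IH y x2)) (count _ _ _ _ reg2) // => y.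
by rewrite -(IH x1 y) (IH x1 x2).
Qed.
End DegenerateRefinement.

Definition deg (V : finType) (g : rel V) (u : V) := #|[set w | g u w]|.

Definition leafhub (V : finType) (g : rel V) (w : V) :=
  ((deg g w == 1) && [exists y, g w y && (2 < deg g y)])
  || ((2 < deg g w) && [exists y, g w y && (deg g y == 1)]).

Definition attached (V : finType) (g : rel V) (u : V) (j : nat) :=
  [exists w, [&& g u w, leafhub g w & deg g w == j.+2]].

Section UncolouredInvariants.
Variables (V1 V2 : finType) (g1 : rel V1) (g2 : rel V2).
Local Notation C1 := (wlC g1 (@nocol V1)).
Local Notation C2 := (wlC g2 (@nocol V2)).

Lemma deg_wlC r u1 u2 : 0 < r -> C1 r u1 = C2 r u2 -> deg g1 u1 = deg g2 u2.
Proof.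
move=> r_gt0 /(wlC_le r_gt0) /(congr1 (fun c => c.2 None)) /= E.
have degE (V : finType) (g : rel V) u :
    #|[set w | g u w && `[< @nocol V w = None >]]| = deg g u.
  by apply: eq_card => w; rewrite !inE asboolT ?andbT.
by rewrite -!degE.
Qed.

Lemma leafhub_wlC u1 u2 : C1 2 u1 = C2 2 u2 -> leafhub g1 u1 = leafhub g2 u2.
Proof.
move=> E; have deg1 w1 w2 : C1 1 w1 = C2 1 w2 -> deg g1 w1 = deg g2 w2 := deg_wlC (r := 1) isT.
rewrite /leafhub (deg_wlC _ E) //.
rewrite (wlC_nbr_exists (P1 := fun y => 2 < deg g1 y) (P2 := fun y => 2 < deg g2 y) E).
  rewrite (wlC_nbr_exists (P1 := fun y => deg g1 y == 1) (P2 := fun y => deg g2 y == 1) E) //.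
  by move=> w1 w2 /deg1 ->.
by move=> w1 w2 /deg1 ->.
Qed.

Lemma attached_wlC u1 u2 j : C1 3 u1 = C2 3 u2 -> attached g1 u1 j = attached g2 u2 j.
Proof.
move=> E; apply: (wlC_nbr_exists (P1 := fun w => leafhub g1 w && (deg g1 w == j.+2))
                                (P2 := fun w => leafhub g2 w && (deg g2 w == j.+2)) E).
by move=> w1 w2 Ew; rewrite (leafhub_wlC Ew) (deg_wlC _ Ew).
Qed.
End UncolouredInvariants.

Section PartialColouring.
Variables (T : finType) (m : nat) (x : 'I_m -> T).

Variant pcol_spec (z : T) : option nat -> Type :=
  | PcolNone of (forall j, x j != z) : pcol_spec z None
  | PcolSome j of x j = z : pcol_spec z (Some j.+1).

Lemma pcolP z : pcol_spec z (pcol x z).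
Proof.
rewrite /pcol; case: pickP => [j /eqP xj|none] /=; first exact: PcolSome.
by constructor=> j; rewrite none.
Qed.

Hypothesis x_inj : injective x.

Lemma pcol_eqSome z (j : 'I_m) : (pcol x z == Some j.+1) = (x j == z).
Proof.
case: (pcolP z) => [none|i <-]; first by rewrite (negbTE (none j)).
by rewrite (inj_eq x_inj) eq_sym.
Qed.

Lemma pcol_x j : pcol x (x j) = Some j.+1.
Proof. by apply/eqP; rewrite pcol_eqSome. Qed.
End PartialColouring.

Lemma card_pcol_preim (T : finType) (m : nat) (x : 'I_m -> T) z :
  injective x -> #|[set i | z == x i]| = (pcol x z != None).
Proof.
move=> x_inj; case: (pcolP x z) => [none|j <-] /=.
  by apply: card_set_nil => i; rewrite eq_sym none.
by rewrite (eq_card (B := pred1 j)) ?card1 // => i; rewrite !inE (inj_eq x_inj) eq_sym.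
Qed.

Lemma pcol_ord0 (T : finType) (x : 'I_0 -> T) z : pcol x z = None.
Proof. by case: (pcolP x z) => // -[]. Qed.

Lemma pcol_mult_eq (TA TB : finType) (m : nat) (a : 'I_m -> TA) (b : 'I_m -> TB) :
  injective a -> injective b -> #|TA| = #|TB| -> mult_eq xpredT xpredT (pcol a) (pcol b).
Proof.
have count (T : finType) (x : 'I_m -> T) o : injective x ->
    #|[set z | `[< pcol x z = o >]]| =
    if o is Some j then #|[set i : 'I_m | i.+1 == j]| else #|T| - m.
  move=> x_inj; case: o => [j|].
    rewrite -(card_imset _ x_inj); apply: eq_card => z; rewrite !inE.
    apply/asboolP/imsetP => [|[i]]; last by rewrite inE => /eqP <- ->; apply: pcol_x.
    by case: (pcolP x z) => // i <- [<-]; exists i; rewrite ?inE.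
  rewrite -[#|T|](cardsC (x @: setT)) card_imset // cardsT card_ord addKn.
  apply: eq_card => z; rewrite !inE; case: (pcolP x z) => [none|i xi].
    rewrite asboolT //; apply/esym/negP => /imsetP[i _ zi].
    by move: (none i); rewrite zi eqxx.
  by rewrite asboolF //; apply/esym/negbF/imsetP; exists i.
by move=> ia ib cT o; rewrite (count _ _ _ ia) (count _ _ _ ib) cT.
Qed.

Lemma wlms_of_pcol (TA TB : finType) (eA : rel TA) (eB : rel TB) (m r : nat)
    (a : 'I_m -> TA) (b : 'I_m -> TB) :
  injective a -> injective b -> #|TA| = #|TB| ->
  (forall x y, pcol a x = pcol b y -> wlC eA (pcol a) r x = wlC eB (pcol b) r y) ->
  wlms eA (pcol a) r = wlms eB (pcol b) r.
Proof.
move=> ia ib cT wl_pcol; apply/wlmsP.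
by apply: mult_eq_comp (pcol_mult_eq ia ib cT) _ => x y _ _; apply: wl_pcol.
Qed.

(* The vertices of G(A',X') outside X': those of A' and the gadgets. *)
Notation pendants m := {i : 'I_m & 'I_(nat_of_ord i).+1}.
Notation shared TA m := (TA + ('I_m + pendants m))%type.

Definition of_shared (TA TX : finType) (m : nat) (w : shared TA m) : gvert TA TX m :=
  match w with inl p => inl (inl p) | inr w => inr w end.

Lemma card_gvert (TL TR : finType) (m : nat) (P : pred (gvert TL TR m)) :
  #|[set u | P u]| = #|[set p | P (inl (inl p))]| + #|[set z | P (inl (inr z))]|
                   + #|[set i | P (inr (inl i))]| + #|[set q | P (inr (inr q))]|.
Proof.
rewrite card_set_sum (card_set_sum (fun u => P (inl u))).
by rewrite (card_set_sum (fun u => P (inr u))) !addnA.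
Qed.

Lemma card_pendants (m : nat) (i : 'I_m) : #|[set q : pendants m | tag q == i]| = i.+1.
Proof.
have tag_inj : injective (Tagged (fun j : 'I_m => 'I_j.+1) (i := i)).
  exact: eq_from_Tagged.
rewrite -[RHS]card_ord -(card_imset _ tag_inj).
apply: eq_card => -[j k]; rewrite !inE; apply/eqP/imsetP => [/= ji|[k' _ ->]] //.
by subst j; exists k.
Qed.

Section Construction.
Variables (TL TR : finType) (eL : rel TL) (eR : rel TR) (m : nat).
Variables (xL : 'I_m -> TL) (xR : 'I_m -> TR).
Local Notation V := (gvert TL TR m).
Local Notation G := (gadj eL eR xL xR).

Definition on_side (u : V) := if u is inl _ then true else false.

Definition side_pcol (u : V) : option nat :=
  match u with inl (inl p) => pcol xL p | inl (inr z) => pcol xR z | inr _ => None end.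

(* None on the gadgets, so that the induction in side_wl_wlC can treat all
   neighbours of a side vertex alike. *)
Definition side_wl s (u : V) : option (wlcol s) :=
  match u with
  | inl (inl p) => Some (wlC eL (pcol xL) s p)
  | inl (inr z) => Some (wlC eR (pcol xR) s z)
  | inr _ => None
  end.

Lemma side_wl_off s u : ~~ on_side u -> side_wl s u = None.
Proof. by case: u => [[]|]. Qed.

Lemma side_wl0 u : side_wl 0 u = if on_side u then Some (side_pcol u) else None.
Proof. by case: u => [[]|]. Qed.

Lemma side_wlS s u : on_side u ->
  side_wl s.+1 u = omap (fun c => (c, fun k =>
    #|[set w | G u w && `[< side_wl s w = Some k >]]|)) (side_wl s u).
Proof.
case: u => [[p|z]|] // _ /=; congr (Some (_, _)); apply: funext => k;
  rewrite card_gvert /= !asbool_NoneSome !card_set0 ?addn0 ?add0n -[LHS]addn0;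
  (congr (_ + _); first by apply: eq_card => y; rewrite !inE asbool_Some);
  by apply/esym/eqP; rewrite cards_eq0; apply/eqP/setP => i; rewrite !inE andbF.
Qed.

Lemma card_side_wl s k : #|[set u | `[< side_wl s u = Some k >]]| =
  wlms eL (pcol xL) s k + wlms eR (pcol xR) s k.
Proof.
rewrite card_gvert /= !asbool_NoneSome !card_set0 !addn0.
by congr (_ + _); apply: eq_card => y; rewrite !inE asbool_Some.
Qed.

Variable d : nat.
Hypotheses (regL : regular eL d) (regR : regular eR d).
Hypotheses (injL : injective xL) (injR : injective xR).

Lemma deg_side u : on_side u -> deg G u = d + (side_pcol u != None).
Proof.
case: u => [[p|z]|] // _; rewrite /deg card_gvert /= !card_set0 ?addn0 ?add0n.
  by rewrite regL card_pcol_preim.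
by rewrite regR card_pcol_preim.
Qed.

Lemma deg_connector i : deg G (inr (inl i)) = i + 3.
Proof.
by rewrite /deg card_gvert /= card_set0 !card_set_eq1 card_pendants addn0 addnC addn2 addn3.
Qed.

Lemma deg_pendant q : deg G (inr (inr q)) = 1.
Proof.
rewrite /deg card_gvert /= !card_set0 add0n addn0.
by rewrite (eq_card (B := pred1 (tag q))) ?card1 // => i; rewrite !inE eq_sym.
Qed.

Lemma nbr_side u w : on_side u -> G u w ->
  if on_side w then d <= deg G w <= d.+1 else (side_pcol u != None) && (2 < deg G w).
Proof.
have bound (b : bool) : d <= d + b <= d.+1 by case: b; rewrite ?addn0 ?addn1 leqnSn ?leqnn.
case: u => [[p|z]|] // _; case: w => [[p'|z']|[i|q]] //= uw;
  first [by rewrite deg_side // bound | by rewrite deg_connector leq_addl (eqP uw) pcol_x].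
Qed.

Hypothesis d_gt0 : 0 < d.

Lemma leafhub_side u : leafhub G u = ~~ on_side u.
Proof.
case: u => [u'|[i|q]]; rewrite /leafhub /=.
- have su : on_side (inl u') by [].
  rewrite (deg_side su); apply/negbTE/norP.
  split; apply/andP => -[degu /existsP[w /andP[uw degw]]];
    move: (nbr_side su uw) degu degw; case: (on_side w) => /andP[];
    case: (side_pcol _ != None) => //=; lia.
- apply/orP; right; rewrite deg_connector leq_addl /=.
  apply/existsP; exists (inr (inr (Tagged (fun j : 'I_m => 'I_j.+1) (ord0 : 'I_i.+1)))).
  by rewrite /= eqxx deg_pendant.
- apply/orP; left; rewrite deg_pendant /=.
  by apply/existsP; exists (inr (inl (tag q))); rewrite /= eqxx deg_connector leq_addl.
Qed.

Lemma attached_side u j : on_side u -> attached G u j = (side_pcol u == Some j).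
Proof.
move=> su; apply/existsP/idP => [[w /and3P[uw]]|].
  rewrite leafhub_side; case: u su uw => [[p|z]|] // _; case: w => [[]|[i|q]] //= /eqP-> _;
    by rewrite deg_connector addn3 pcol_x // => /eqP[->].
case: u su => [[p|z]|] //= _; [case: (pcolP xL p) | case: (pcolP xR z)] => // i <- /eqP[<-];
  by exists (inr (inl i)); rewrite /= eqxx leafhub_side // deg_connector addn3 /=.
Qed.
End Construction.

Section TwoConstructions.
Variables (TL1 TR1 TL2 TR2 : finType) (eL1 : rel TL1) (eR1 : rel TR1).
Variables (eL2 : rel TL2) (eR2 : rel TR2) (m d : nat).
Variables (xL1 : 'I_m -> TL1) (xR1 : 'I_m -> TR1) (xL2 : 'I_m -> TL2) (xR2 : 'I_m -> TR2).
Hypotheses (regL1 : regular eL1 d) (regR1 : regular eR1 d).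
Hypotheses (regL2 : regular eL2 d) (regR2 : regular eR2 d).
Hypotheses (injL1 : injective xL1) (injR1 : injective xR1).
Hypotheses (injL2 : injective xL2) (injR2 : injective xR2).
Hypothesis d_gt0 : 0 < d.
Local Notation G1 := (gadj eL1 eR1 xL1 xR1).
Local Notation G2 := (gadj eL2 eR2 xL2 xR2).
Local Notation C1 := (wlC G1 (@nocol _)).
Local Notation C2 := (wlC G2 (@nocol _)).

Lemma on_side_wlC u v : C1 2 u = C2 2 v -> on_side u = on_side v.
Proof.
move/leafhub_wlC; rewrite (leafhub_side regL1 regR1 injL1 injR1) //.
by rewrite (leafhub_side regL2 regR2 injL2 injR2) // => /negb_inj.
Qed.

Lemma side_pcol_wlC u v :
  on_side u -> C1 3 u = C2 3 v -> side_pcol xL1 xR1 u = side_pcol xL2 xR2 v.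
Proof.
move=> su E; have sv : on_side v by rewrite -(on_side_wlC (wlC_le (s := 2) (r := 3) isT E)).
have eqSome j : (side_pcol xL1 xR1 u == Some j) = (side_pcol xL2 xR2 v == Some j).
  rewrite -(attached_side regL1 regR1 injL1 injR1) //.
  by rewrite -(attached_side regL2 regR2 injL2 injR2) // (attached_wlC j E).
case: (side_pcol _ _ u) eqSome => [j|] eqSome; first by apply/esym/eqP; rewrite -eqSome.
by case: (side_pcol _ _ v) eqSome => // j /(_ j); rewrite eqxx.
Qed.

Lemma side_wl_wlC s u v : C1 s.+3 u = C2 s.+3 v ->
  side_wl eL1 eR1 xL1 xR1 s u = side_wl eL2 eR2 xL2 xR2 s v.
Proof.
elim: s u v => [|s IH] u v E.
  rewrite !side_wl0 -(on_side_wlC (wlC_le (s := 2) (r := 3) isT E)).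
  by case: ifP => // su; rewrite (side_pcol_wlC su E).
have sE := on_side_wlC (wlC_le (s := 2) (r := s.+4) isT E).
case: (boolP (on_side u)) => su; last by rewrite !side_wl_off // -sE.
rewrite !side_wlS -?sE // (IH _ _ (wlC_le (leqnSn _) E)).
case: (side_wl _ _ _ _ s v) => //= c; congr (Some (c, _)); apply: funext => k.
by apply: (mult_eq_comp (wlC_nbr E)) => w1 w2 _ _; apply: IH.
Qed.

Lemma wlms_sides s k : wlms G1 (@nocol _) s.+3 = wlms G2 (@nocol _) s.+3 ->
  wlms eL1 (pcol xL1) s k + wlms eR1 (pcol xR1) s k =
  wlms eL2 (pcol xL2) s k + wlms eR2 (pcol xR2) s k.
Proof.
move=> /wlmsP eqC; rewrite -!card_side_wl.
exact: (mult_eq_comp eqC (fun u v _ _ => @side_wl_wlC s u v) (Some k)).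
Qed.
End TwoConstructions.

Lemma WL1_eq_of_construction (TA TB : finType) (eA : rel TA) (eB : rel TB) (d m : nat)
    (a : 'I_m -> TA) (b : 'I_m -> TB) :
  regular eA d -> regular eB d -> #|TA| = #|TB| -> injective a -> injective b ->
  WL1 (gadj eA eB a b) (@nocol _) = WL1 (gadj eA eA a a) (@nocol _) ->
  WL1 eA (pcol a) = WL1 eB (pcol b).
Proof.
move=> regA regB cT ia ib eqG; rewrite /WL1 -cT; congr existT.
have [d0|d_gt0] := posnP d.
  move: regA regB; rewrite d0 => /regular0_edgeless noA /regular0_edgeless noB.
  by apply: wlms_of_pcol => // x y; apply: wlC_edgeless.
case: m a b ia ib eqG => [|m] a b ia ib eqG.
  by apply: wlms_of_pcol => // x y _; apply: (wlC_regular _ _ _ regA regB) => z; apply: pcol_ord0.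
have cV : #|{: gvert TA TA m.+1}| = #|{: gvert TA TB m.+1}| by rewrite !card_sum cT.
move: eqG; rewrite /WL1 cV => eqWL; have eqG := existT_inj2 eqWL.
have N_ge : #|TA|.+3 <= #|{: gvert TA TB m.+1}|.
  have := leq_card a ia; rewrite card_ord => m_le.
  rewrite !card_sum -cT card_ord (@leq_trans (#|TA| + #|TA| + (m.+1 + 1))) //; first by lia.
  by rewrite !leq_add2l; apply/card_gt0P; exists (existT _ ord0 ord0).
apply: funext => k; apply/esym/eqP; rewrite -(eqn_add2l (wlms eA (pcol a) #|TA| k)).
apply/eqP; apply: (wlms_sides regA regB regA regA ia ib ia ia d_gt0).
exact: wlms_le N_ge eqG.
Qed.

Local Open Scope ring_scope.

Section WalkState.
Variables (TA : finType) (eA : rel TA) (m : nat) (a : 'I_m -> TA) (d lam mu : nat).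
Variables (padj : 'I_m -> 'I_m -> bool) (tgt : option (shared TA m)) (teq tadj : 'I_m -> bool).

(* A function on the vertices of G(A',X'): its values on A', on the connectors and on
   the pendants, and on X' the form xform with coefficients wal, wbe, wga, wde, wep.
   The target is tgt when it lies outside X' and is in X' when tgt = None; then
   teq i, tadj i tell whether x_i equals or is adjacent to it. *)
Record wstate := WState {
  wA : TA -> int; wC : 'I_m -> int; wP : pendants m -> int;
  wal : int; wbe : 'I_m -> int; wga : 'I_m -> int; wde : int; wep : int }.

Definition xform (s : wstate) (zeq zadj : 'I_m -> bool) (ve va : bool) : int :=
  wal s + \sum_j wbe s j * (zeq j)%:R + \sum_j wga s j * (zadj j)%:R
  + wde s * ve%:R + wep s * va%:R.

Definition tgt_in_X := tgt == None.

(* Summation over neighbours; sum_nbr_adj is what keeps the X'-part of this form. *)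
Definition wstep (s : wstate) : wstate :=
  WState (fun p => \sum_(p' | eA p p') wA s p' + \sum_(i | p == a i) wC s i)
     (fun i => wA s (a i) + xform s (fun j => i == j) (padj i) (teq i) (tadj i)
               + \sum_(q : pendants m | tag q == i) wP s q)
     (fun q => wC s (tag q))
     (wal s * d%:R + mu%:R * \sum_j wga s j + wep s * mu%:R * tgt_in_X%:R)
     (fun j => (d%:R - mu%:R) * wga s j + wC s j)
     (fun j => wbe s j + (lam%:R - mu%:R) * wga s j)
     (wep s * (d%:R - mu%:R))
     (wde s + wep s * (lam%:R - mu%:R)).

Definition wstart : wstate :=
  WState (fun p => (tgt == Some (inl p))%:R) (fun i => (tgt == Some (inr (inl i)))%:R)
     (fun q => (tgt == Some (inr (inr q)))%:R) 0 (fun _ => 0) (fun _ => 0) tgt_in_X%:R 0.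

Definition coord_val (s : wstate)
    (c : shared TA m + ('I_m -> bool) * ('I_m -> bool) * bool * bool) : int :=
  match c with
  | inl (inl p) => wA s p
  | inl (inr (inl i)) => wC s i
  | inl (inr (inr q)) => wP s q
  | inr (zeq, zadj, ve, va) => xform s zeq zadj ve va
  end.
End WalkState.

Lemma sum_nat_indicator (T : finType) (P b : pred T) :
  \sum_(i | P i) ((b i)%:R : int) = #|[set i | P i && b i]|%:R.
Proof.
rewrite -sum1_card natr_sum (eq_bigl (fun i => P i && b i)) => [|i]; last by rewrite inE.
by rewrite big_mkcondr /=; apply: eq_bigr => i _; case: (b i).
Qed.

Section StronglyRegular.
Variables (T : finType) (e : rel T) (n d lam mu : nat).
Hypothesis srg_e : srg e n d lam mu.

Lemma srg_sym : symmetric e. Proof. by case: srg_e => -[]. Qed.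
Lemma srg_irr : irreflexive e. Proof. by case: srg_e => -[]. Qed.
Lemma srg_regular : regular e d. Proof. by case: srg_e. Qed.
Lemma srg_card : #|T| = n. Proof. by case: srg_e. Qed.

Lemma sum_nbr1 z : \sum_(z' | e z z') (1 : int) = d%:R.
Proof.
by rewrite -(srg_regular z) -sum1_card natr_sum; apply: eq_bigl => y; rewrite inE.
Qed.

Lemma sum_nbr_eq z w : \sum_(z' | e z z') ((z' == w)%:R : int) = (e z w)%:R.
Proof. by rewrite sum_nat_indicator card_nbr_eq. Qed.

Lemma sum_nbr_adj z w : \sum_(z' | e z z') ((e z' w)%:R : int) =
  mu%:R + (d%:R - mu%:R) * (z == w)%:R + (lam%:R - mu%:R) * (e z w)%:R.
Proof.
case: srg_e => -[sym irr] _ reg lamP muP.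
rewrite sum_nat_indicator.
have -> : [set y | e z y && e y w] = [set y | e z y && e w y].
  by apply/setP => y; rewrite !inE (sym y w).
case: (eqVneq z w) => [->|zw].
  rewrite irr /= mulr1 mulr0 addr0 addrC subrK -(reg w).
  by congr (_%:R); apply: eq_card => y; rewrite !inE andbb.
case: (boolP (e z w)) => adj; first by rewrite (lamP _ _ zw adj) mulr0 addr0 mulr1 addrC subrK.
by rewrite (muP _ _ zw adj) !mulr0 !addr0.
Qed.
End StronglyRegular.

Section WalkCount.
Variables (TA TX : finType) (eA : rel TA) (eX : rel TX) (m : nat).
Variables (a : 'I_m -> TA) (x : 'I_m -> TX) (n d lam mu : nat).
Hypotheses (srgX : srg eX n d lam mu) (x_inj : injective x).
Local Notation V := (gvert TA TX m).
Local Notation G := (gadj eA eX a x).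
Variable v : V.

Definition tgt_shared : option (shared TA m) :=
  match v with inl (inl p) => Some (inl p) | inl (inr _) => None | inr w => Some (inr w) end.
Definition tgt_eq (z : TX) := if v is inl (inr y) then z == y else false.
Definition tgt_adj (z : TX) := if v is inl (inr y) then eX z y else false.

Definition walk_coords (u : V) : shared TA m + ('I_m -> bool) * ('I_m -> bool) * bool * bool :=
  match u with
  | inl (inl p) => inl (inl p)
  | inl (inr z) => inr (fun j => z == x j, fun j => eX z (x j), tgt_eq z, tgt_adj z)
  | inr w => inl (inr w)
  end.

Local Notation wstep_v := (wstep eA a d lam mu (fun i j => eX (x i) (x j)) tgt_shared
                             (fun i => tgt_eq (x i)) (fun i => tgt_adj (x i))).

Lemma sum_nbr_xform (s : wstate TA m) z :
  \sum_(z' | eX z z') xform s (fun j => z' == x j) (fun j => eX z' (x j)) (tgt_eq z') (tgt_adj z') =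
  wal s * d%:R + \sum_j wbe s j * (eX z (x j))%:R
  + \sum_j wga s j * (mu%:R + (d%:R - mu%:R) * (z == x j)%:R + (lam%:R - mu%:R) * (eX z (x j))%:R)
  + wde s * (tgt_adj z)%:R
  + wep s * (mu%:R * (tgt_in_X tgt_shared)%:R + (d%:R - mu%:R) * (tgt_eq z)%:R
             + (lam%:R - mu%:R) * (tgt_adj z)%:R).
Proof.
rewrite /xform !big_split /=; congr (_ + _ + _ + _ + _).
- by rewrite -(sum_nbr1 srgX z) mulr_sumr; apply: eq_bigr => *; rewrite mulr1.
- by rewrite exchange_big /=; apply: eq_bigr => j _; rewrite -mulr_sumr sum_nbr_eq.
- by rewrite exchange_big /=; apply: eq_bigr => j _; rewrite -mulr_sumr (sum_nbr_adj srgX).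
- rewrite -mulr_sumr /tgt_eq /tgt_adj /tgt_in_X /tgt_shared; congr (_ * _).
  by case: v => [[p|y]|w] /=; rewrite ?sum_nbr_eq // big1_eq.
- rewrite -mulr_sumr /tgt_eq /tgt_adj /tgt_in_X /tgt_shared; congr (_ * _).
  case: v => [[p|y]|w] /=; rewrite ?(sum_nbr_adj srgX) ?mulr1 //;
  by rewrite big1_eq !mulr0 !addr0.
Qed.

Lemma walks0_coords u :
  (walks G 0 u v)%:R = coord_val (wstart tgt_shared) (walk_coords u) :> int.
Proof.
have sum0 (F : 'I_m -> int) : \sum_j 0 * F j = 0 by rewrite big1 // => j _; rewrite mul0r.
case: u => [[p|z]|[i|q]] /=; rewrite /tgt_shared /tgt_eq /tgt_adj /xform /tgt_in_X;
  case: v => [[p'|z']|[i'|q']] //=; rewrite ?sum0 ?mul0r ?mulr0 ?add0r ?addr0 ?mul1r //;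
  by rewrite eq_sym.
Qed.

Lemma sum_gvert (u : V) (F : V -> int) :
  \sum_(w | G u w) F w =
    \sum_(p | G u (inl (inl p))) F (inl (inl p)) + \sum_(z | G u (inl (inr z))) F (inl (inr z))
  + \sum_(i | G u (inr (inl i))) F (inr (inl i)) + \sum_(q | G u (inr (inr q))) F (inr (inr q)).
Proof. by rewrite big_sumType /= !big_sumType /= !addrA. Qed.

Lemma walksS_coords (s : wstate TA m) k u :
  (forall w, (walks G k w v)%:R = coord_val s (walk_coords w) :> int) ->
  (walks G k.+1 u v)%:R = coord_val (wstep_v s) (walk_coords u) :> int.
Proof.
move=> IH; rewrite [walks _ _ _ _]/= natr_sum sum_gvert.
rewrite !(eq_bigr _ (fun w _ => IH _)) /=.
case: u => [[p|z]|[i|q]] /=.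
- by rewrite !big_pred0_eq !addr0.
- rewrite !big_pred0_eq add0r addr0 sum_nbr_xform.
  have -> : \sum_(i < m | z == x i) wC s i = \sum_i wC s i * (z == x i)%:R.
    by rewrite big_mkcond /=; apply: eq_bigr => i _; case: (z == x i); rewrite ?mulr1 ?mulr0.
  rewrite /xform /=.
  set eqx := fun j => ((z == x j)%:R : int); set adj := fun j => ((eX z (x j))%:R : int).
  rewrite -/(eqx _) -/(adj _).
  have sumE (F1 F2 : 'I_m -> int) (c : int) (ind : 'I_m -> int) :
      \sum_j (c * F1 j + F2 j) * ind j = c * \sum_j F1 j * ind j + \sum_j F2 j * ind j.
    by rewrite mulr_sumr -big_split; apply: eq_bigr => j _ /=; ring.
  have sumE' (F1 F2 : 'I_m -> int) (c : int) (ind : 'I_m -> int) :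
      \sum_j (F1 j + c * F2 j) * ind j = \sum_j F1 j * ind j + c * \sum_j F2 j * ind j.
    by rewrite mulr_sumr -big_split; apply: eq_bigr => j _ /=; ring.
  have sumG : \sum_j wga s j * (mu%:R + (d%:R - mu%:R) * eqx j + (lam%:R - mu%:R) * adj j) =
     mu%:R * \sum_j wga s j + (d%:R - mu%:R) * \sum_j wga s j * eqx j
     + (lam%:R - mu%:R) * \sum_j wga s j * adj j.
    by rewrite !mulr_sumr -!big_split; apply: eq_bigr => j _ /=; ring.
  by rewrite sumE sumE' sumG; ring.
- rewrite !big_pred1_eq big_pred0_eq addr0.
  by rewrite (_ : (fun j => x i == x j) = (fun j => i == j)) //; apply: funext => j; rewrite inj_eq.
- rewrite !big_pred0_eq add0r !addr0 (eq_bigl (fun i => i == tag q)) => [|i].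
    by rewrite big_pred1_eq.
  by rewrite eq_sym.
Qed.

Lemma walks_coords k u :
  (walks G k u v)%:R = coord_val (iter k wstep_v (wstart tgt_shared)) (walk_coords u) :> int.
Proof. by elim: k u => [|k IH] u; [exact: walks0_coords | exact: walksS_coords]. Qed.
End WalkCount.

Lemma wstar_eq (V1 V2 : finType) (g1 : rel V1) (g2 : rel V2) u1 v1 u2 v2 :
  #|V1| = #|V2| -> (forall k, walks g1 k u1 v1 = walks g2 k u2 v2) ->
  wstar g1 u1 v1 = wstar g2 u2 v2.
Proof. by move=> cV E; rewrite /wstar cV; apply: eq_map. Qed.

Section WalkTransfer.
Variables (TA T1 T2 : finType) (eA : rel TA) (e1 : rel T1) (e2 : rel T2) (m : nat).
Variables (a : 'I_m -> TA) (x1 : 'I_m -> T1) (x2 : 'I_m -> T2) (n d lam mu : nat).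
Hypotheses (srg1 : srg e1 n d lam mu) (srg2 : srg e2 n d lam mu).
Hypotheses (inj1 : injective x1) (inj2 : injective x2).
Hypothesis adj_x : forall i j, e1 (x1 i) (x1 j) = e2 (x2 i) (x2 j).
Local Notation G1 := (gadj eA e1 a x1).
Local Notation G2 := (gadj eA e2 a x2).

Lemma walks_transfer k u1 v1 u2 v2 :
  tgt_shared v1 = tgt_shared v2 ->
  (forall i, tgt_eq v1 (x1 i) = tgt_eq v2 (x2 i)) ->
  (forall i, tgt_adj e1 v1 (x1 i) = tgt_adj e2 v2 (x2 i)) ->
  walk_coords e1 x1 v1 u1 = walk_coords e2 x2 v2 u2 ->
  walks G1 k u1 v1 = walks G2 k u2 v2.
Proof.
move=> Esh Eeq Eadj Ecoords; apply/eqP; rewrite -(eqr_nat int).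
rewrite (walks_coords eA a srg1 inj1) (walks_coords eA a srg2 inj2) Ecoords Esh.
rewrite (funext Eeq) (funext Eadj).
suff -> : (fun i j => e1 (x1 i) (x1 j)) = (fun i j => e2 (x2 i) (x2 j)) by [].
by do 2 apply: funext => ?.
Qed.

Definition xsim (z1 : T1) (z2 : T2) :=
  (forall j, (z1 == x1 j) = (z2 == x2 j)) /\ (forall j, e1 z1 (x1 j) = e2 z2 (x2 j)).

Let card_V : #|{: gvert TA T1 m}| = #|{: gvert TA T2 m}|.
Proof. by rewrite !card_sum (srg_card srg1) (srg_card srg2). Qed.

Let sym1 := srg_sym srg1.
Let sym2 := srg_sym srg2.

Lemma wstar_shared w0 w :
  wstar G1 (of_shared T1 w0) (of_shared T1 w) = wstar G2 (of_shared T2 w0) (of_shared T2 w).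
Proof.
by apply: wstar_eq card_V _ => k; apply: walks_transfer; case: w0 w => [?|[?|?]] [?|[?|?]].
Qed.

Lemma wstar_shared_X w0 y1 y2 : xsim y1 y2 ->
  wstar G1 (of_shared T1 w0) (inl (inr y1)) = wstar G2 (of_shared T2 w0) (inl (inr y2)).
Proof.
case=> Eeq Eadj; apply: wstar_eq card_V _ => k; apply: walks_transfer => //= [i|i|].
- by rewrite eq_sym Eeq eq_sym.
- by rewrite sym1 Eadj sym2.
- by case: w0 => [?|[?|?]].
Qed.

Lemma wstar_X_shared z1 z2 w : xsim z1 z2 ->
  wstar G1 (inl (inr z1)) (of_shared T1 w) = wstar G2 (inl (inr z2)) (of_shared T2 w).
Proof.
case=> Eeq Eadj; apply: wstar_eq card_V _ => k; apply: walks_transfer;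
  case: w => [?|[?|?]] //=; by rewrite (funext Eeq) (funext Eadj).
Qed.

Lemma wstar_X z1 z2 y1 y2 : xsim z1 z2 -> xsim y1 y2 ->
  (z1 == y1) = (z2 == y2) -> e1 z1 y1 = e2 z2 y2 ->
  wstar G1 (inl (inr z1)) (inl (inr y1)) = wstar G2 (inl (inr z2)) (inl (inr y2)).
Proof.
case=> Eeq Eadj [Feq Fadj] Ezy Azy; apply: wstar_eq card_V _ => k.
apply: walks_transfer => //= [i|i|]; first by rewrite eq_sym Feq eq_sym.
  by rewrite sym1 Fadj sym2.
by rewrite (funext Eeq) (funext Eadj) Ezy Azy.
Qed.
End WalkTransfer.

Local Close Scope ring_scope.

Lemma card_gvert_shared (TA TX : finType) (m : nat) (P : pred (gvert TA TX m)) :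
  #|[set u | P u]| = #|[set w | P (of_shared TX w)]| + #|[set z | P (inl (inr z))]|.
Proof.
by rewrite card_gvert [in RHS]card_set_sum /= [in RHS]card_set_sum /=; lia.
Qed.

Section SharedColours.
Variables (T1 T2 : finType) (e1 : rel T1) (e2 : rel T2) (m : nat).
Variables (x1 : 'I_m -> T1) (x2 : 'I_m -> T2).
Hypotheses (inj1 : injective x1) (inj2 : injective x2).

Lemma wlC1_xsim z1 z2 :
  wlC e1 (pcol x1) 1 z1 = wlC e2 (pcol x2) 1 z2 -> xsim e1 e2 x1 x2 z1 z2.
Proof.
move=> [Ep Ef]; split=> j; first by rewrite eq_sym -(pcol_eqSome inj1) Ep pcol_eqSome // eq_sym.
have count (T : finType) (e : rel T) (x : 'I_m -> T) z : injective x ->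
    #|[set y | e z y && `[< pcol x y = Some j.+1 >]]| = e z (x j).
  move=> x_inj; rewrite -card_nbr_eq; apply: eq_card => y; rewrite !inE.
  by congr (_ && _); apply/asboolP/eqP => [/eqP|->]; rewrite ?pcol_eqSome ?pcol_x // eq_sym => /eqP.
have := congr1 (fun f => f (Some j.+1)) Ef; rewrite /= !count //.
by case: (e1 z1 (x1 j)); case: (e2 z2 (x2 j)).
Qed.

Lemma adj_x_of_wlms1 : wlms e1 (pcol x1) 1 = wlms e2 (pcol x2) 1 ->
  forall i j, e1 (x1 i) (x1 j) = e2 (x2 i) (x2 j).
Proof.
move=> /wlmsP M i j; have [y2 _ Ey] := mult_eq_exists M (isT : xpredT (x1 i)).
have [Feq Fadj] := wlC1_xsim (esym Ey).
by have -> : x2 i = y2 by apply/eqP; rewrite eq_sym -Feq eqxx.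
Qed.
End SharedColours.

Section OmegaTransfer.
Variables (TA T1 T2 : finType) (eA : rel TA) (e1 : rel T1) (e2 : rel T2) (m : nat).
Variables (a : 'I_m -> TA) (x1 : 'I_m -> T1) (x2 : 'I_m -> T2) (n d lam mu r : nat).
Hypotheses (srg1 : srg e1 n d lam mu) (srg2 : srg e2 n d lam mu).
Hypotheses (inj1 : injective x1) (inj2 : injective x2).
Hypothesis eqwl : wlms e1 (pcol x1) r.+1 = wlms e2 (pcol x2) r.+1.
Local Notation G1 := (gadj eA e1 a x1).
Local Notation G2 := (gadj eA e2 a x2).

Let adj_x := adj_x_of_wlms1 inj1 inj2 (wlms_le (isT : 0 < r.+1) eqwl).

Let wstar_sh := wstar_shared eA a srg1 srg2 inj1 inj2 adj_x.
Let wstar_shX := wstar_shared_X eA a srg1 srg2 inj1 inj2 adj_x.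
Let wstar_Xsh := wstar_X_shared eA a srg1 srg2 inj1 inj2 adj_x.
Let wstar_XX := wstar_X eA a srg1 srg2 inj1 inj2 adj_x.
Let xsim_wlC s z1 z2 (E : wlC e1 (pcol x1) s.+1 z1 = wlC e2 (pcol x2) s.+1 z2) :=
  wlC1_xsim inj1 inj2 (wlC_le (ltn0Sn s) E).

Definition omega_agree s :=
  (forall w, omega G1 s (of_shared T1 w) = omega G2 s (of_shared T2 w)) /\
  (forall y1 y2, wlC e1 (pcol x1) s.+1 y1 = wlC e2 (pcol x2) s.+1 y2 ->
     omega G1 s (inl (inr y1)) = omega G2 s (inl (inr y2))).

Lemma omega_agree0 : omega_agree 0.
Proof.
split=> [w|y1 y2 E]; first exact: wstar_sh.
by apply: wstar_XX; rewrite ?eqxx ?(srg_irr srg1) ?(srg_irr srg2) //; apply: xsim_wlC E.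
Qed.

Lemma omega_agreeS s : s.+1 <= r -> omega_agree s -> omega_agree s.+1.
Proof.
move=> le_sr [IHsh IHX].
have eqwlS : wlms e1 (pcol x1) s.+1 = wlms e2 (pcol x2) s.+1 by apply: wlms_le eqwl; lia.
have M := (wlmsP _ _ _ _ _ ).1 eqwlS.
split=> [w|y1 y2 E]; rewrite /= ?IHsh.
  congr pair; apply: funext => p; rewrite !card_gvert_shared; congr (_ + _).
    by apply: eq_card => w'; rewrite !inE IHsh wstar_sh.
  apply: (mult_eq_comp M) => z1 z2 _ _ Ez.
  by rewrite (IHX _ _ Ez) (wstar_shX _ (xsim_wlC Ez)).
have sim_y := xsim_wlC E.
rewrite (IHX _ _ (wlC_le (leqnSn _) E)); congr pair; apply: funext => p.
rewrite !card_gvert_shared; congr (_ + _).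
  by apply: eq_card => w; rewrite !inE IHsh (wstar_Xsh _ sim_y).
have := wlC_rel_mult_eq (srg_sym srg1) (srg_irr srg1) (srg_sym srg2) (srg_irr srg2) eqwlS E.
move/mult_eq_comp; apply=> z1 z2 _ _ Erel.
have Ez : wlC e1 (pcol x1) s.+1 z1 = wlC e2 (pcol x2) s.+1 z2 := congr1 (fun t => t.1.1) Erel.
have Eeq : (z1 == y1) = (z2 == y2) := congr1 (fun t => t.1.2) Erel.
have Eadj : e1 z1 y1 = e2 z2 y2 := congr1 snd Erel.
rewrite (IHX _ _ Ez) (wstar_XX sim_y (xsim_wlC Ez)) //; first by rewrite eq_sym Eeq eq_sym.
by rewrite (srg_sym srg1) Eadj (srg_sym srg2).
Qed.

Lemma omegams_transfer : omegams G1 r = omegams G2 r.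
Proof.
have [IHsh IHX] : omega_agree r.
  suff agree s : s <= r -> omega_agree s by exact: agree.
  by elim: s => [|s IH] le_sr; [exact: omega_agree0 | apply: omega_agreeS (IH (ltnW le_sr))].
have M := (wlmsP _ _ _ _ _ ).1 eqwl.
apply: funext => o; rewrite /omegams !card_gvert_shared; congr (_ + _).
  by apply: eq_card => w; rewrite !inE IHsh.
by apply: (mult_eq_comp M) => z1 z2 _ _ /IHX ->.
Qed.
End OmegaTransfer.

Theorem lemma6p3 (TA TB : finType) (eA : rel TA) (eB : rel TB)
  (n d lam mu m : nat) (a : 'I_m -> TA) (b : 'I_m -> TB) :
  srg eA n d lam mu -> srg eB n d lam mu ->
  injective a -> injective b ->
  (WL1 eA (pcol a) <> WL1 eB (pcol b) ->
     WL1 (gadj eA eB a b) (@nocol (gvert TA TB m)) <>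
     WL1 (gadj eA eA a a) (@nocol (gvert TA TA m)))
  /\
  (forall r : nat, 1 <= r ->
     wlms eA (pcol a) r = wlms eB (pcol b) r ->
     omegams (gadj eA eB a b) r.-1 = omegams (gadj eA eA a a) r.-1).
Proof.
move=> srgA srgB ia ib; split.
  move=> neqWL eqWL; apply: neqWL.
  apply: (WL1_eq_of_construction (srg_regular srgA) (srg_regular srgB)) eqWL => //.
  by rewrite (srg_card srgA) (srg_card srgB).
case=> // r _ eqwl.
exact: (omegams_transfer eA a srgB srgA ib ia (esym eqwl)).
Qed.
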